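(* Let $D$ be a quasilocal API-domain with quotient field $K$ and let $L$ be a subfield of $K$. Then $D\cap L$ is a quasilocal API-domain.
   Context: An API-domain is an integral domain in which for every nonempty subset $\{d_\alpha\}$ of nonzero elements there is a natural number $n$ with the ideal generated by $\{d_\alpha^n\}$ principal. Quasilocal: unique maximal ideal. *)

(* Integral domains are modeled as subrings of a field K,
   given by (Prop-valued) predicates on K. *)
From mathcomp Require Import all_boot all_algebra.
Set Implicit Arguments. Unset Strict Implicit. Unset Printing Implicit Defensive.
Import GRing.Theory.
Local Open Scope ring_scope.

Section Defs.
Variable K : fieldType.

Definition is_subring (S : K -> Prop) : Prop :=
  [/\ S 0, S 1, (forall x y, S x -> S y -> S (x - y))
    & (forall x y, S x -> S y -> S (x * y))].

Definition is_subfield (L : K -> Prop) : Prop :=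
  is_subring L /\ (forall x, L x -> x != 0 -> L x^-1).

Definition is_quotient_field (D : K -> Prop) : Prop :=
  forall x : K, exists a b, [/\ D a, D b, b != 0 & x = a / b].

Definition in_ideal_gen (S A : K -> Prop) (x : K) : Prop :=
  exists s : seq (K * K),
    (forall p, p \in s -> S p.1 /\ A p.2) /\
    x = \sum_(p <- s) p.1 * p.2.

Definition principal_in (S I : K -> Prop) : Prop :=
  exists g, S g /\ forall x, I x <-> exists r, S r /\ x = r * g.

Definition API_domain (S : K -> Prop) : Prop :=
  forall A : K -> Prop, (exists a, A a) -> (forall a, A a -> S a /\ a != 0) ->
    exists n : nat, (0 < n)%N /\
      principal_in S (in_ideal_gen S (fun y => exists d, A d /\ y = d ^+ n)).

Definition is_ideal (S I : K -> Prop) : Prop :=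
  [/\ (forall x, I x -> S x), I 0, (forall x y, I x -> I y -> I (x + y))
    & (forall r x, S r -> I x -> I (r * x))].

Definition is_maximal_ideal (S M : K -> Prop) : Prop :=
  [/\ is_ideal S M, ~ M 1 &
    forall J, is_ideal S J -> (forall x, M x -> J x) ->
      (forall x, J x <-> M x) \/ J 1].

Definition quasilocal (S : K -> Prop) : Prop :=
  exists M, is_maximal_ideal S M /\
    forall M', is_maximal_ideal S M' -> forall x, M' x <-> M x.

End Defs.

(* Every element of a quasilocal domain D outside its maximal ideal M is a unit,
   since by Zorn's lemma every proper ideal lies in a maximal one.  Hence the
   units of D ∩ L are exactly its elements outside M ∩ L, and D ∩ L is
   quasilocal with maximal ideal M ∩ L.  If the D-ideal generated by the n-th
   powers of a set A of nonzero elements of D ∩ L is principal, writing its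
   generator g as a combination of the a^n shows that one of the a^n / g is a
   unit; so the ideal is generated by some d^n with d in A.  Then every a^n / d^n
   lies in D ∩ L, and d^n generates the corresponding ideal of D ∩ L. *)
From mathcomp Require Import all_boot all_algebra.
From mathcomp Require Import boolp classical_sets.
Set Implicit Arguments. Unset Strict Implicit. Unset Printing Implicit Defensive.
Import GRing.Theory.
Local Open Scope ring_scope.
Local Open Scope classical_set_scope.

Lemma sum_closed (V : nmodType) (P : V -> Prop) (T : eqType) (s : seq T) F :
  P 0 -> (forall x y, P x -> P y -> P (x + y)) -> {in s, forall i, P (F i)} ->
  P (\sum_(i <- s) F i).
Proof. by move=> P0 PD PF; rewrite big_seq; apply: big_ind. Qed.

Section Subrings.
Variables (K : fieldType) (S : K -> Prop).
Hypothesis S_subring : is_subring S.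

Lemma subringD x y : S x -> S y -> S (x + y).
Proof.
move=> Sx Sy; have [S0 _ SB _] := S_subring.
have -> : x + y = x - (0 - y) by rewrite sub0r opprK.
by apply: (SB) => //; apply: SB.
Qed.

Lemma subringX x n : S x -> S (x ^+ n).
Proof.
move=> Sx; have [_ S1 _ SM] := S_subring.
by elim: n => [|n IHn]; rewrite ?expr0 // exprS; apply: SM.
Qed.

Lemma subring_meet (T : K -> Prop) :
  is_subring T -> is_subring (fun x => S x /\ T x).
Proof.
have [S0 S1 SB SM] := S_subring; move=> [T0 T1 TB TM].
by split=> // x y [Sx Tx] [Sy Ty]; split; [apply: SB | apply: TB | apply: SM | apply: TM].
Qed.

Lemma in_ideal_gen_base (A : K -> Prop) y : A y -> in_ideal_gen S A y.
Proof.
move=> Ay; have [_ S1 _ _] := S_subring.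
exists [:: (1, y)]; split; first by move=> p; rewrite inE => /eqP ->.
by rewrite big_seq1 mul1r.
Qed.

Lemma principal_in_ideal_gen (A : K -> Prop) b :
  S b -> A b -> b != 0 -> (forall y, A y -> S (y / b)) ->
  principal_in S (in_ideal_gen S A).
Proof.
move=> Sb Ab b0 Adiv; have [S0 _ _ SM] := S_subring.
exists b; split=> // x; split.
- move=> [s [sSA ->]]; exists (\sum_(p <- s) p.1 * (p.2 / b)); split.
    apply: sum_closed => // [u v|p /sSA [Sp1 Ap2]]; first exact: subringD.
    exact/SM/Adiv.
  by rewrite mulr_suml; apply: eq_bigr => p _; rewrite -mulrA divfK.
- move=> [r [Sr ->]]; exists [:: (r, b)]; rewrite big_seq1; split=> //.
  by move=> p; rewrite inE => /eqP ->.
Qed.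

End Subrings.

Lemma subfield_div (K : fieldType) (L : K -> Prop) x y :
  is_subfield L -> L x -> L y -> L (x / y).
Proof.
move=> [[L0 _ _ LM] Linv] Lx Ly; apply: LM => //.
by have [->|y0] := eqVneq y 0; [rewrite invr0 | apply: Linv].
Qed.

Section Ideals.
Variables (K : fieldType) (D : K -> Prop).
Hypothesis D_subring : is_subring D.

Definition principal_ideal (x : K) : K -> Prop :=
  fun y => exists r, D r /\ y = r * x.

Lemma principal_ideal_is_ideal x : D x -> is_ideal D (principal_ideal x).
Proof.
move=> Dx; have [D0 _ _ DM] := D_subring.
split=> [_ [r [Dr ->]]|||]; first exact: DM.
- by exists 0; rewrite mul0r.
- move=> _ _ [r [Dr ->]] [s [Ds ->]].
  by exists (r + s); rewrite mulrDl; split=> //; apply: subringD.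
- by move=> t _ Dt [r [Dr ->]]; exists (t * r); rewrite mulrA; split=> //; apply: DM.
Qed.

(* The empty set belongs to the Zorn family [P] (its last condition is vacuous
   for it), so that the empty chain has an upper bound. *)
Lemma ideal_sub_maximal (I : K -> Prop) :
  is_ideal D I -> ~ I 1 -> exists M, is_maximal_ideal D M /\ I `<=` M.
Proof.
move=> [ID I0 IDD IM] nI1.
pose P J := [/\ J `<=` D, ~ J 1, (forall x y, J x -> J y -> J (x + y)),
  (forall r x, D r -> J x -> J (r * x)) & (exists x, J x) -> I `<=` J].
have PI : P I by split=> // _ x.
have [A [[AD nA1 ADD AM AI] Amax]] : exists A, P A /\ forall B, A `<` B -> ~ P B.
  apply: Zorn_bigcup => F FP Ftot; split.
  - by move=> x [X /FP[XD _ _ _ _] /XD].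
  - by move=> [X /FP[_ nX1 _ _ _]].
  - move=> x y [X FX Xx] [Y FY Yy].
    have [XY|YX] := Ftot X Y FX FY.
    + by exists Y => //; have [_ _ YD _ _] := FP Y FY; apply: YD => //; apply: XY.
    + by exists X => //; have [_ _ XD _ _] := FP X FX; apply: XD => //; apply: YX.
  - by move=> r x Dr [X FX Xx]; exists X => //; have [_ _ _ XM _] := FP X FX; apply: XM.
  - move=> [x [X FX Xx]] y Iy; exists X => //.
    by have [_ _ _ _ XI] := FP X FX; apply: XI => //; exists x.
have {}AI : I `<=` A.
  apply: AI; apply: contrapT => A_empty; apply: (Amax I) PI; split.
    by move=> x Ax; case: A_empty; exists x.
  by move=> /(_ 0 I0) A0; apply: A_empty; exists 0.
exists A; split=> //; split=> //; first by split=> //; apply: AI.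
move=> J [JD J0 JDD JM] AJ; have [|nJ1] := pselect (J 1); [by right | left].
have PJ : P J by split=> // _ x /AI /AJ.
move=> x; split=> [Jx|/AJ//]; apply: contrapT => nAx.
by apply: (Amax J) PJ; split=> // /(_ x Jx).
Qed.

End Ideals.

Lemma quasilocal_of_nonunits_ideal (K : fieldType) (S N : K -> Prop) :
  is_ideal S N -> ~ N 1 -> (forall x, S x -> ~ N x -> S x^-1) -> quasilocal S.
Proof.
move=> HN nN1 Sinv; have [_ N0 _ _] := HN.
have proper_sub J : is_ideal S J -> ~ J 1 -> J `<=` N.
  move=> [JS _ _ JM] nJ1 x Jx; apply: contrapT => nNx; apply: nJ1.
  have x0 : x != 0 by apply: contra_notN nNx => /eqP ->.
  by rewrite -(mulVf x0); apply: JM => //; apply/Sinv/nNx/JS.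
have Nmax : is_maximal_ideal S N.
  split=> // J HJ NJ; have [|nJ1] := pselect (J 1); [by right | left].
  by move=> x; split=> [/(proper_sub J HJ nJ1)|/NJ].
exists N; split=> // M [HM nM1 Mmax] x.
have MN := proper_sub M HM nM1.
by case: (Mmax N HN MN) => // NM; split=> [/MN|/NM].
Qed.

Section Quasilocal.
Variables (K : fieldType) (D M : K -> Prop).
Hypotheses (D_subring : is_subring D) (M_max : is_maximal_ideal D M).
Hypothesis M_unique : forall M', is_maximal_ideal D M' -> forall x, M' x <-> M x.

Lemma quasilocal_inv x : D x -> ~ M x -> D x^-1.
Proof.
move=> Dx nMx; have [[_ M0 _ _] _ _] := M_max; apply: contrapT => nDxi.
have x0 : x != 0 by apply: contra_notN nMx => /eqP ->.
have xD_proper : ~ principal_ideal D x 1.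
  move=> [r [Dr r_x]]; apply: nDxi.
  by rewrite (_ : x^-1 = r) // -[r](mulfK x0) -r_x mul1r.
have [M' [M'max xDM']] :=
  ideal_sub_maximal (principal_ideal_is_ideal D_subring Dx) xD_proper.
by apply/nMx/(M_unique M'max)/xDM'; exists 1; rewrite mul1r; case: D_subring.
Qed.

Lemma principal_gen_by_member (B : K -> Prop) :
  (exists2 b, B b & b != 0) -> principal_in D (in_ideal_gen D B) ->
  exists2 b, B b & forall y, B y -> D (y / b).
Proof.
move=> [b0 Bb0 b0_neq0] [g [_ gB]].
have [[_ M0 MDD MM] nM1 _] := M_max; have [_ D1 _ DM] := D_subring.
have g0 : g != 0.
  have [r [_ b0E]] := (gB b0).1 (in_ideal_gen_base D_subring Bb0).
  by apply: contra_neq b0_neq0 => g0; rewrite b0E g0 mulr0.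
have Bdiv y : B y -> D (y / g).
  by move=> /(in_ideal_gen_base D_subring) /gB [r [Dr ->]]; rewrite mulfK.
have [s [sB gs]] := (gB g).2 (ex_intro _ 1 (conj D1 (esym (mul1r g)))).
have [p ps nMp] : exists2 p, p \in s & ~ M (p.1 * (p.2 / g)).
  apply: contrapT => allM; apply: nM1.
  have -> : 1 = \sum_(p <- s) p.1 * (p.2 / g).
    by rewrite -(divff g0) {1}gs mulr_suml; apply: eq_bigr => p _; rewrite mulrA.
  by apply: sum_closed => // p ps; apply: contrapT => nMp; apply: allM; exists p.
have [Dp1 Bp2] := sB p ps.
have Dgp2 : D (g / p.2).
  by rewrite -invf_div; apply: quasilocal_inv => [|/(MM _ _ Dp1)//]; apply: Bdiv.
exists p.2 => // y By.
have -> : y / p.2 = y / g * (g / p.2) by rewrite mulrA divfK.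
by apply: DM => //; apply: Bdiv.
Qed.

Section Contraction.
Variable L : K -> Prop.
Hypothesis L_subfield : is_subfield L.

Lemma quasilocal_contraction : quasilocal (fun x => D x /\ L x).
Proof.
have [[MD M0 MDD MM] nM1 _] := M_max; have [[L0 _ _ LM] Linv] := L_subfield.
apply: (@quasilocal_of_nonunits_ideal _ _ (fun x => M x /\ L x)).
- split=> [x [/MD]|||] //.
  + by move=> x y [Mx Lx] [My Ly]; split; [apply: MDD | exact: (subringD L_subfield.1)].
  + by move=> r x [Dr Lr] [Mx Lx]; split; [apply: MM | apply: LM].
- by case.
- move=> x [Dx Lx] nMLx; have nMx : ~ M x by move=> Mx; apply: nMLx.
  split; first exact: quasilocal_inv.
  by apply: Linv => //; apply: contra_notN nMx => /eqP ->.
Qed.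

Lemma API_contraction : API_domain D -> API_domain (fun x => D x /\ L x).
Proof.
move=> D_API A [a0 Aa0] A_nz.
pose An n y := exists d, A d /\ y = d ^+ n.
have [n [n_gt0 An_principal]] := D_API A (ex_intro _ a0 Aa0)
  (fun a Aa => conj (A_nz a Aa).1.1 (A_nz a Aa).2).
have [_ [d [Ad ->]] Andiv] : exists2 b, An n b & forall y, An n y -> D (y / b).
  apply: (principal_gen_by_member _ An_principal).
  by exists (a0 ^+ n); [exists a0 | rewrite expf_neq0 // (A_nz a0 Aa0).2].
have [[Dd Ld] d_nz] := A_nz d Ad.
have E_subring := subring_meet D_subring L_subfield.1.
exists n; split=> //; apply: principal_in_ideal_gen => //.
- exact: (subringX E_subring n (conj Dd Ld)).
- by exists d.
- exact: expf_neq0.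
- move=> _ [a [Aa ->]]; split; first by apply: Andiv; exists a.
  have [[_ La] _] := A_nz a Aa.
  by apply: subfield_div => //; exact: (subringX L_subfield.1).
Qed.

End Contraction.
End Quasilocal.

Theorem theorem4 (K : fieldType) (D L : K -> Prop) :
  is_subring D -> is_quotient_field D -> quasilocal D -> API_domain D ->
  is_subfield L ->
  quasilocal (fun x => D x /\ L x) /\ API_domain (fun x => D x /\ L x).
Proof.
move=> D_subring _ [M [M_max M_unique]] D_API L_subfield; split.
- exact: (quasilocal_contraction D_subring M_max M_unique L_subfield).
- exact: (API_contraction D_subring M_max M_unique L_subfield D_API).
Qed.
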